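(* Let $\mathcal{A}=\{a,b,c,\overline{a},\overline{b},\overline{c}\}$ and let $\varphi$ be the morphism of $\mathcal{A}^*$ defined by $$\varphi(a)=a\overline{c},\ \varphi(b)=c\overline{b},\ \varphi(c)=b\overline{a},\ \varphi(\overline{a})=ac,\ \varphi(\overline{b})=cb,\ \varphi(\overline{c})=ba,$$ and let $\mathcal{S}_\infty$ be its iterative fixed point beginning with $a$ (the classical Hanoi sequence, $\mathcal{S}_\infty = a\,\overline{c}\,b\,a\,c\,\overline{b}\,a\,\overline{c}\,b\,\overline{a}\,c\,b\cdots$). Let $\xi$ be the (non-uniform) morphism of $\mathcal{A}^*$ defined by $$\xi(a)=a\overline{c}b,\ \xi(b)=\overline{b},\ \xi(c)=\overline{a}c,\ \xi(\overline{a})=acb,\ \xi(\overline{b})=b,\ \xi(\overline{c})=ac.$$ Then $\mathcal{S}_\infty$ is the iterative fixed point of $\xi$ beginning with $a$; in particular the classical Hanoi sequence is non-uniformly pure morphic. Similarly, let $\mathcal{B}=\{a,b,\overline{a},\overline{b}\}$, let $\lambda$ be the morphism of $\mathcal{B}^*$ defined by $$\lambda(a)=aba,\ \lambda(\overline{a})=ab\overline{a},\ \lambda(b)=\overline{b}\,\overline{a}\,b,\ \lambda(\overline{b})=\overline{b}\,\overline{a}\,\overline{b},$$ and let $\mathcal{H}_\infty$ be its iterative fixed point beginning with $a$ (the lazy Hanoi sequence). Let $\eta$ be the (non-uniform) morphism of $\mathcal{B}^*$ defined by $$\eta(a)=aba\overline{b},\ \eta(b)=\overline{a}b,\ \eta(\overline{a})=ab\overline{a}\,\overline{b},\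 \eta(\overline{b})=\overline{a}\,\overline{b}.$$ Then $\mathcal{H}_\infty$ is the iterative fixed point of $\eta$ beginning with $a$; in particular the lazy Hanoi sequence is non-uniformly pure morphic.
   Context: For a finite alphabet $\mathcal{A}$, $\mathcal{A}^*$ is the free monoid of finite words under concatenation; a morphism $\sigma$ of $\mathcal{A}^*$ satisfies $\sigma(uv)=\sigma(u)\sigma(v)$ and is extended to infinite sequences letterwise. A morphism is $k$-uniform if all images of letters have length $k$; it is non-uniform otherwise. If $\sigma(a_0)=a_0x$ with $\sigma^\ell(x)$ nonempty for all $\ell$, then the words $\sigma^\ell(a_0)$ converge (have longer and longer common prefixes) to an infinite sequence, called the iterative fixed point of $\sigma$ beginning with $a_0$. A sequence is non-uniformly pure morphic if it is the iterative fixed point of a non-uniform morphism. (The letters $a,b,c$ denote the Tower of Hanoi moves peg I→II, II→III, III→I and the barred letters their inverses; $\mathcal{S}_\infty$ is the infinite sequence of moves of the optimal recursive solution, and $\mathcal{H}_\infty$ that of the lazy Tower of Hanoi using only moves $a,\overline a,b,\overline b$.) *)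

From mathcomp Require Import all_boot.
Set Implicit Arguments. Unset Strict Implicit. Unset Printing Implicit Defensive.

Definition morph_of {A : Type} (sigma : A -> seq A) (w : seq A) : seq A :=
  flatten (map sigma w).

Definition uniform {A : Type} (sigma : A -> seq A) : Prop :=
  exists k : nat, forall x : A, size (sigma x) = k.

Definition non_uniform {A : Type} (sigma : A -> seq A) : Prop := ~ uniform sigma.

Definition is_iter_fixed_point {A : Type} (sigma : A -> seq A) (a0 : A)
    (u : nat -> A) : Prop :=
  (exists x : seq A, sigma a0 = a0 :: x /\
      forall l : nat, iter l (morph_of sigma) x <> [::]) /\
  forall n : nat, exists L : nat, forall l : nat, L <= l ->
      n < size (iter l (morph_of sigma) [:: a0]) /\
      nth a0 (iter l (morph_of sigma) [:: a0]) n = u n.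

Definition non_uniformly_pure_morphic {A : Type} (u : nat -> A) : Prop :=
  exists (sigma : A -> seq A) (a0 : A),
    non_uniform sigma /\ is_iter_fixed_point sigma a0 u.

(* Alphabet {a,b,c,abar,bbar,cbar} *)
Inductive A6 : Type := Ha | Hb | Hc | Hab | Hbb | Hcb.

Definition phi (x : A6) : seq A6 :=
  match x with
  | Ha => [:: Ha; Hcb] | Hb => [:: Hc; Hbb] | Hc => [:: Hb; Hab]
  | Hab => [:: Ha; Hc] | Hbb => [:: Hc; Hb] | Hcb => [:: Hb; Ha]
  end.

Definition xi (x : A6) : seq A6 :=
  match x with
  | Ha => [:: Ha; Hcb; Hb] | Hb => [:: Hbb] | Hc => [:: Hab; Hc]
  | Hab => [:: Ha; Hc; Hb] | Hbb => [:: Hb] | Hcb => [:: Ha; Hc]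
  end.

(* Alphabet {a,b,abar,bbar} *)
Inductive B4 : Type := La | Lb | Lab | Lbb.

Definition lambda (x : B4) : seq B4 :=
  match x with
  | La => [:: La; Lb; La] | Lab => [:: La; Lb; Lab]
  | Lb => [:: Lbb; Lab; Lb] | Lbb => [:: Lbb; Lab; Lbb]
  end.

Definition eta (x : B4) : seq B4 :=
  match x with
  | La => [:: La; Lb; La; Lbb] | Lb => [:: Lab; Lb]
  | Lab => [:: La; Lb; Lab; Lbb] | Lbb => [:: Lab; Lbb]
  end.

From mathcomp Require Import all_boot.
Set Implicit Arguments. Unset Strict Implicit. Unset Printing Implicit Defensive.

(* For each letter x, [xi (phi x)] and [phi (xi x)] agree up to short
   boundary words: [xi (phi x) ++ d x = g x ++ phi (xi x)].  Along a word whose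
   consecutive letters x y satisfy [d x = g y] the defects telescope, and
   [phi^m(a)] is such a word, starting with a letter whose left defect is
   empty.  Hence [xi (phi^m(a))] is a prefix of [phi^(m+2)(a)], so every
   [xi^l(a)] is a prefix of [phi^(2l)(a)] and both iterations converge to the
   same sequence.  The lazy Hanoi sequence is handled identically. *)

Definition is_prefix {T : Type} (u v : seq T) : Prop := exists t, v = u ++ t.

Section Prefix.
Variable T : Type.
Implicit Types u v w : seq T.

Lemma is_prefix_refl u : is_prefix u u.
Proof. by exists [::]; rewrite cats0. Qed.

Lemma is_prefix_trans v u w : is_prefix u v -> is_prefix v w -> is_prefix u w.
Proof. by move=> [t ->] [t' ->]; exists (t ++ t'); rewrite catA. Qed.

Lemma nth_prefix x0 u v n : is_prefix u v -> n < size u -> nth x0 v n = nth x0 u n.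
Proof. by move=> [t ->] ltnu; rewrite nth_cat ltnu. Qed.

End Prefix.

Lemma sorted_cat3 {T : Type} (e : rel T) (u v w : seq T) : 0 < size v ->
  sorted e (u ++ v) -> sorted e (v ++ w) -> sorted e (u ++ v ++ w).
Proof.
case: v => // y v _; case: u => [|x u] //=.
rewrite !cat_path /= => /and3P[-> -> _] /=.
by rewrite cat_path => ->.
Qed.

Section Morphism.
Variables (T : Type) (s : T -> seq T).
Implicit Types u v w : seq T.

Definition nonerasing : Prop := forall x, 0 < size (s x).

Lemma morph_of_cons x w : morph_of s (x :: w) = s x ++ morph_of s w.
Proof. by []. Qed.

Lemma morph_of_cat u v : morph_of s (u ++ v) = morph_of s u ++ morph_of s v.
Proof. by rewrite /morph_of map_cat flatten_cat. Qed.

Lemma morph_of_prefix u v : is_prefix u v -> is_prefix (morph_of s u) (morph_of s v).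
Proof. by move=> [t ->]; exists (morph_of s t); rewrite morph_of_cat. Qed.

Lemma size_morph_of_nonerasing w : nonerasing -> size w <= size (morph_of s w).
Proof.
move=> s_ne; elim: w => //= x w IHw.
by rewrite morph_of_cons size_cat -add1n leq_add.
Qed.

Lemma size_iter_morph_of_gt0 w l :
  nonerasing -> 0 < size w -> 0 < size (iter l (morph_of s) w).
Proof.
move=> s_ne w_ne; elim: l => //= l IHl.
exact: leq_trans IHl (size_morph_of_nonerasing _ s_ne).
Qed.

Lemma iter_morph_of_neq_nil w l :
  nonerasing -> 0 < size w -> iter l (morph_of s) w <> [::].
Proof.
by move=> s_ne /(size_iter_morph_of_gt0 l s_ne); case: (iter l (morph_of s) w).
Qed.

Variables (a0 : T) (tail : seq T).
Hypothesis s_a0 : s a0 = a0 :: tail.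

Local Notation W l := (iter l (morph_of s) [:: a0]).

Lemma iter_morph_of_head l : exists t, W l = a0 :: t.
Proof.
elim: l => [|l [t IHl]]; first by exists [::].
by exists (tail ++ morph_of s t); rewrite /= IHl morph_of_cons s_a0.
Qed.

Lemma iter_morph_of_prefix m n : m <= n -> is_prefix (W m) (W n).
Proof.
move=> /subnK <-; elim: (n - m) => [|k IHk]; first exact: is_prefix_refl.
apply: is_prefix_trans IHk _; rewrite addSn.
elim: (k + m) => [|j IHj]; first by exists tail; rewrite /= /morph_of /= s_a0 cats0.
exact: morph_of_prefix IHj.
Qed.

Hypotheses (s_ne : nonerasing) (tail_ne : 0 < size tail).

Lemma size_iter_morph_of l : l < size (W l).
Proof.
elim: l => //= l IHl; have [t Wl] := iter_morph_of_head l.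
rewrite Wl /= ltnS in IHl; rewrite Wl morph_of_cons s_a0 /= ltnS size_cat.
rewrite -add1n leq_add //; exact: leq_trans IHl (size_morph_of_nonerasing _ s_ne).
Qed.

Lemma iter_fixed_point_exists : exists S, is_iter_fixed_point s a0 S.
Proof.
exists (fun n => nth a0 (W n.+1) n); split.
  by exists tail; split => // l; apply: iter_morph_of_neq_nil.
move=> n; exists n.+1 => l le_nl.
have lt_n_size : n < size (W l) by rewrite (ltn_trans _ (size_iter_morph_of l)).
split=> //; rewrite (nth_prefix _ (iter_morph_of_prefix le_nl)) //.
exact: ltnW (size_iter_morph_of _).
Qed.

End Morphism.

Lemma is_iter_fixed_point_of_prefix {T : Type} (p q : T -> seq T) a0 tail u :
  nonerasing q -> q a0 = a0 :: tail -> 0 < size tail ->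
  (forall l, exists2 m, l <= m &
     is_prefix (iter l (morph_of q) [:: a0]) (iter m (morph_of p) [:: a0])) ->
  is_iter_fixed_point p a0 u -> is_iter_fixed_point q a0 u.
Proof.
move=> q_ne q_a0 tail_ne qp_prefix [_ u_lim]; split.
  by exists tail; split => // l; apply: iter_morph_of_neq_nil.
move=> n; have [L uL] := u_lim n; exists (n + L) => l le_l.
have lt_n_size : n < size (iter l (morph_of q) [:: a0]).
  exact: leq_ltn_trans (leq_trans (leq_addr L n) le_l) (size_iter_morph_of q_a0 q_ne tail_ne l).
split=> //; have [m le_lm pre_lm] := qp_prefix l.
have le_Lm : L <= m by rewrite (leq_trans (leq_addl n L)) // (leq_trans le_l).
by have [_ <-] := uL m le_Lm; rewrite (nth_prefix _ pre_lm).
Qed.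

Section CommutationDefect.
Variables (T : Type) (p q : T -> seq T) (next : rel T) (d g : T -> seq T).
Hypothesis comm_defect :
  forall x, morph_of q (p x) ++ d x = g x ++ morph_of p (q x).
Hypothesis defect_next : forall x y, next x y -> d x = g y.

Lemma morph_of_comm_path x w : path next x w ->
  morph_of q (morph_of p (x :: w)) ++ d (last x w)
  = g x ++ morph_of p (morph_of q (x :: w)).
Proof.
elim: w x => [|y w IHw] x /=.
  by rewrite !morph_of_cons /morph_of /= !cats0 comm_defect.
move=> /andP[nxy pw]; rewrite morph_of_cons morph_of_cat -catA IHw //.
by rewrite catA -(defect_next nxy) comm_defect -catA -morph_of_cat.
Qed.

Hypotheses (p_ne : nonerasing p) (p_sorted : forall x, sorted next (p x)).
Hypothesis p_sorted2 : forall x y, next x y -> sorted next (p x ++ p y).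

Lemma sorted_morph_of w : sorted next w -> sorted next (morph_of p w).
Proof.
case: w => // x w; elim: w x => [|y w IHw] x.
  by rewrite /morph_of /= cats0 => _; exact: p_sorted.
move=> /= /andP[nxy pw]; rewrite !morph_of_cons.
by apply: sorted_cat3; [exact: p_ne | exact: p_sorted2 | exact: IHw].
Qed.

Variables (a0 : T) (tail : seq T).
Hypotheses (p_a0 : p a0 = a0 :: tail) (g_a0 : g a0 = [::]).
Hypothesis q_a0_prefix : is_prefix (q a0) (iter 2 (morph_of p) [:: a0]).

Lemma morph_of_iter_prefix m :
  is_prefix (morph_of q (iter m (morph_of p) [:: a0]))
            (iter m.+2 (morph_of p) [:: a0]).
Proof.
elim: m => [|m IHm]; first by rewrite /morph_of /= cats0.
apply: is_prefix_trans (morph_of_prefix p IHm).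
have [t Wm] := iter_morph_of_head p_a0 m.
have sorted_Wm : sorted next (a0 :: t).
  rewrite -Wm; elim: m {IHm Wm} => //= m IHm; exact: sorted_morph_of.
exists (d (last a0 t)); rewrite /= Wm.
by rewrite (morph_of_comm_path sorted_Wm) g_a0.
Qed.

Lemma iter_comm_prefix l :
  is_prefix (iter l (morph_of q) [:: a0]) (iter l.*2 (morph_of p) [:: a0]).
Proof.
elim: l => [|l IHl]; first exact: is_prefix_refl.
exact: is_prefix_trans (morph_of_prefix q IHl) (morph_of_iter_prefix _).
Qed.

Lemma is_iter_fixed_point_comm_defect tailq u :
  nonerasing q -> q a0 = a0 :: tailq -> 0 < size tailq ->
  is_iter_fixed_point p a0 u -> is_iter_fixed_point q a0 u.
Proof.
move=> q_ne q_a0 tailq_ne; apply: is_iter_fixed_point_of_prefix q_ne q_a0 tailq_ne _.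
by move=> l; exists l.*2; [rewrite -addnn leq_addr | exact: iter_comm_prefix].
Qed.

End CommutationDefect.

Lemma non_uniform_size_neq {T : Type} (s : T -> seq T) x y :
  size (s x) != size (s y) -> non_uniform s.
Proof. by move=> neq_xy [k size_k]; rewrite !size_k eqxx in neq_xy. Qed.

(* The pair of pegs touched by a move: {I,II}, {III,I} or {II,III}.  In the
   classical sequence consecutive moves cycle through these pairs. *)
Definition hanoi_pair (x : A6) : nat :=
  match x with Ha | Hab => 0 | Hc | Hcb => 1 | Hb | Hbb => 2 end.

Definition hanoi_next : rel A6 :=
  fun x y => hanoi_pair y == (hanoi_pair x).+1 %% 3.

(* [xi (phi x) ++ hanoi_right_defect x = hanoi_left_defect x ++ phi (xi x)] *)
Definition hanoi_right_defect (x : A6) : seq A6 :=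
  match x with Ha | Hab => [:: Hbb] | Hb | Hbb => [::] | Hc | Hcb => [:: Hab] end.

Definition hanoi_left_defect (x : A6) : seq A6 :=
  match x with Ha | Hab => [::] | Hb | Hbb => [:: Hab] | Hc | Hcb => [:: Hbb] end.

Definition lazy_a_move (x : B4) : bool :=
  match x with La | Lab => true | Lb | Lbb => false end.

(* In the lazy sequence [a]-moves and [b]-moves alternate. *)
Definition lazy_next : rel B4 := fun x y => lazy_a_move x != lazy_a_move y.

(* [eta (lambda x) ++ lazy_right_defect x = lazy_left_defect x ++ lambda (eta x)] *)
Definition lazy_right_defect (x : B4) : seq B4 :=
  match x with La | Lab => [:: Lab; Lbb] | _ => [::] end.

Definition lazy_left_defect (x : B4) : seq B4 :=
  match x with La | Lab => [::] | _ => [:: Lab; Lbb] end.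

Lemma xi_fixed_point_of_phi S : is_iter_fixed_point phi Ha S -> is_iter_fixed_point xi Ha S.
Proof.
apply: (@is_iter_fixed_point_comm_defect _ phi xi hanoi_next
          hanoi_right_defect hanoi_left_defect) => //; try by case.
- by do 2 case.
- by do 2 case.
- by exists [:: Ha].
Qed.

Lemma eta_fixed_point_of_lambda H : is_iter_fixed_point lambda La H -> is_iter_fixed_point eta La H.
Proof.
apply: (@is_iter_fixed_point_comm_defect _ lambda eta lazy_next
          lazy_right_defect lazy_left_defect) => //; try by case.
- by do 2 case.
- by do 2 case.
- by exists [:: Lab; Lb; La; Lb; La].
Qed.

Theorem mainTheorem1 :
  ((exists S : nat -> A6, is_iter_fixed_point phi Ha S) /\
   non_uniform xi /\
   (forall S : nat -> A6, is_iter_fixed_point phi Ha S ->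
      is_iter_fixed_point xi Ha S /\ non_uniformly_pure_morphic S)) /\
  ((exists H : nat -> B4, is_iter_fixed_point lambda La H) /\
   non_uniform eta /\
   (forall H : nat -> B4, is_iter_fixed_point lambda La H ->
      is_iter_fixed_point eta La H /\ non_uniformly_pure_morphic H)).
Proof.
have xi_nu : non_uniform xi by apply: (@non_uniform_size_neq _ _ Ha Hb).
have eta_nu : non_uniform eta by apply: (@non_uniform_size_neq _ _ La Lb).
split; split.
- by apply: (@iter_fixed_point_exists _ _ _ [:: Hcb]) => // - [].
- split=> // S /xi_fixed_point_of_phi S_xi; split=> //.
  by exists xi, Ha.
- by apply: (@iter_fixed_point_exists _ _ _ [:: Lb; La]) => // - [].
- split=> // H /eta_fixed_point_of_lambda H_eta; split=> //.
  by exists eta, La.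
Qed.
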